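(* Let $R$ be a commutative ring and $f\in R[[X]]$. Suppose $f_0=ab$ with $a,b\in R$ and $(a,b)=R$, and choose $r,s\in R$ with $ra+sb=1$. Set $g_0=0$ and, for $n\ge 1$, $g_n=f_n-rs\sum_{i=1}^{n-1}g_ig_{n-i}$. Then $g=\sum_{n\ge0}g_nX^n\in R[[X]]$ is the unique solution $g$ with $g_0=0$ of the equation $f=(a+sg)(b+rg)$, and $(a+sg,\,b+rg)=R[[X]]$.
   Context: $f_i$ denotes the coefficient of $X^i$ in $f$. *)

From mathcomp Require Import all_boot all_algebra.
Set Implicit Arguments. Unset Strict Implicit. Unset Printing Implicit Defensive.
Import GRing.Theory.
Local Open Scope ring_scope.

(* Formal power series over R, represented by their coefficient sequences:
   f n is the coefficient f_n of X^n. *)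
Definition pser (R : Type) := nat -> R.

Section PSer.
Variable R : comPzRingType.

Definition pconst (c : R) : pser R := fun n => if n is 0 then c else 0.
Definition padd (f g : pser R) : pser R := fun n => f n + g n.
Definition pscale (c : R) (f : pser R) : pser R := fun n => c * f n.
Definition pmul (f g : pser R) : pser R :=
  fun n => \sum_(i < n.+1) f i * g (n - i)%N.

Definition pcomaximal (A B : pser R) : Prop :=
  exists U V : pser R, forall n, padd (pmul U A) (pmul V B) n = pconst 1 n.

Fixpoint gtab (f : pser R) (r s : R) (n : nat) : seq R :=
  match n with
  | 0 => [:: 0]
  | m.+1 => let l := gtab f r s m in
      rcons l (f m.+1 - r * s * \sum_(1 <= i < m.+1) l`_i * l`_(m.+1 - i))
  end.

Definition gser (f : pser R) (r s : R) : pser R := fun n => (gtab f r s n)`_n.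

End PSer.

From mathcomp Require Import all_boot all_algebra.
From mathcomp Require Import ring zify.
Set Implicit Arguments. Unset Strict Implicit. Unset Printing Implicit Defensive.
Import GRing.Theory.
Local Open Scope ring_scope.

(* For n >= 1 the n-th coefficient of (a + s h)(b + r h) is
   (r a + s b) h_n + r s sum_{0<i<n} h_i h_{n-i} = h_n + r s sum_{0<i<n} h_i h_{n-i},
   so the equation f = (a + s h)(b + r h) is precisely the recursion defining g,
   which therefore has exactly one solution with h_0 = 0.  Moreover
   r (a + s g) + s (b + r g) has constant coefficient 1, hence is invertible
   in R[[X]], and multiplying a Bezout relation by its inverse shows that the
   two factors are comaximal. *)

Section CourseOfValues.
Variables (T : Type) (x0 : T) (F : nat -> seq T -> T).

Fixpoint cv_tab n : seq T :=
  if n is m.+1 then rcons (cv_tab m) (F m (cv_tab m)) else [:: x0].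

Definition cv_rec n := nth x0 (cv_tab n) n.

Lemma cv_tabE n : cv_tab n = mkseq cv_rec n.+1.
Proof.
elim: n => //= n IH; rewrite mkseqS -IH; congr rcons.
by rewrite /cv_rec /= nth_rcons IH size_mkseq ltnn eqxx.
Qed.

Lemma cv_recS n : cv_rec n.+1 = F n (mkseq cv_rec n.+1).
Proof. by rewrite {1}/cv_rec /= nth_rcons cv_tabE size_mkseq ltnn eqxx. Qed.

End CourseOfValues.

Section PowerSeries.
Variable R : comPzRingType.
Implicit Types (c : R) (A B h k u : pser R).

Lemma pconst_gt0 c n : (0 < n)%N -> pconst c n = 0.
Proof. by case: n. Qed.

Lemma pmul_nat A B n : pmul A B n = \sum_(0 <= i < n.+1) A i * B (n - i)%N.
Proof. by rewrite big_mkord. Qed.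

Lemma pmul0 A B : pmul A B 0 = A 0%N * B 0%N.
Proof. by rewrite /pmul big_ord1. Qed.

Lemma pmul_left_inverse u : u 0%N = 1 ->
  exists w, forall n, pmul w u n = pconst 1 n.
Proof.
move=> u0.
pose w := cv_rec 1 (fun m l => - \sum_(i < m.+1) l`_i * u (m.+1 - i)%N).
exists w => -[|m]; first by rewrite pmul0 u0 mulr1.
rewrite /pmul big_ord_recr /= subnn u0 mulr1 {2}/w cv_recS.
under [X in _ - X]eq_bigr => i _ do rewrite nth_mkseq //.
exact: subrr.
Qed.

Lemma pcomaximal_Bezout0 A B r s : r * A 0%N + s * B 0%N = 1 -> pcomaximal A B.
Proof.
move=> AB0.
pose u n := r * A n + s * B n.
have [w wu1] := pmul_left_inverse AB0 : exists w, forall n, pmul w u n = pconst 1 n.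
exists (pscale r w), (pscale s w) => n.
rewrite /padd /pmul -big_split -wu1; apply: eq_bigr => i _.
by rewrite /pscale /u /=; ring.
Qed.

Variables a b r s : R.

Lemma pmul_affine0 h : h 0%N = 0 ->
  pmul (padd (pconst a) (pscale s h)) (padd (pconst b) (pscale r h)) 0 = a * b.
Proof. by move=> h0; rewrite pmul0 /padd /pscale /= h0 !mulr0 !addr0. Qed.

Lemma pmul_affineS h m : h 0%N = 0 ->
  pmul (padd (pconst a) (pscale s h)) (padd (pconst b) (pscale r h)) m.+1 =
  (r * a + s * b) * h m.+1 + r * s * \sum_(1 <= i < m.+1) h i * h (m.+1 - i)%N.
Proof.
move=> h0; rewrite pmul_nat big_nat_recl // big_nat_recr //=.
rewrite subn0 subnn big_add1 /= /padd /pscale /= h0 big_distrr /=.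
have mid : \sum_(0 <= i < m) (pconst a i.+1 + s * h i.+1) *
             (pconst b (m.+1 - i.+1)%N + r * h (m.+1 - i.+1)%N)
         = \sum_(0 <= i < m) r * s * (h i.+1 * h (m.+1 - i.+1)%N).
  apply: eq_big_nat => i /andP[_ lt_im].
  by rewrite !pconst_gt0 ?subn_gt0 //; ring.
by rewrite mid; ring.
Qed.

Lemma affine_factor_unique h k : r * a + s * b = 1 ->
  h 0%N = 0 -> k 0%N = 0 ->
  (forall n, pmul (padd (pconst a) (pscale s h)) (padd (pconst b) (pscale r h)) n
           = pmul (padd (pconst a) (pscale s k)) (padd (pconst b) (pscale r k)) n) ->
  forall n, h n = k n.
Proof.
move=> ab1 h0 k0 hk n; elim/ltn_ind: n => -[|m] IH; first by rewrite h0 k0.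
have := hk m.+1; rewrite !pmul_affineS // ab1 !mul1r.
have -> : \sum_(1 <= i < m.+1) h i * h (m.+1 - i)%N
        = \sum_(1 <= i < m.+1) k i * k (m.+1 - i)%N.
  by apply: eq_big_nat => i /andP[i_gt0 i_le]; rewrite !IH //; lia.
exact: addIr.
Qed.

End PowerSeries.

Section Recursion.
Variables (R : comPzRingType) (f : pser R) (r s : R).

Lemma gtab_cv n : gtab f r s n =
  cv_tab 0 (fun m l => f m.+1 - r * s * \sum_(1 <= i < m.+1) l`_i * l`_(m.+1 - i)) n.
Proof. by elim: n => //= n ->. Qed.

Lemma gserS m : gser f r s m.+1 =
  f m.+1 - r * s * \sum_(1 <= i < m.+1) gser f r s i * gser f r s (m.+1 - i)%N.
Proof.
rewrite /gser gtab_cv -/(cv_rec _ _ _) cv_recS; congr (_ - _ * _).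
apply: eq_big_nat => i /andP[i_gt0 i_le].
by rewrite !gtab_cv !nth_mkseq //; lia.
Qed.

End Recursion.

Theorem proposition2p2 (R : comPzRingType) (f : pser R) (a b r s : R) :
  f 0%N = a * b ->
  r * a + s * b = 1 ->
  let g := gser f r s in
  [/\ g 0%N = 0,
      (forall n, f n = pmul (padd (pconst a) (pscale s g))
                            (padd (pconst b) (pscale r g)) n),
      (forall h : pser R, h 0%N = 0 ->
         (forall n, f n = pmul (padd (pconst a) (pscale s h))
                               (padd (pconst b) (pscale r h)) n) ->
         forall n, h n = g n)
    & pcomaximal (padd (pconst a) (pscale s g)) (padd (pconst b) (pscale r g))].
Proof.
move=> f0 ab1 g.
have g0 : g 0%N = 0 by [].
have gsol n : f n = pmul (padd (pconst a) (pscale s g)) (padd (pconst b) (pscale r g)) n.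
  case: n => [|m]; first by rewrite pmul_affine0.
  by rewrite pmul_affineS // ab1 mul1r /g gserS subrK.
split=> // [h h0 hsol|].
  by apply: (affine_factor_unique ab1) => // n; rewrite -hsol.
apply: (@pcomaximal_Bezout0 _ _ _ r s).
by rewrite /padd /pscale /= g0 !mulr0 !addr0.
Qed.
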